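(* If $K\subseteq\beta\mathbb{T}$ is a nonempty compact set closed under $\hat{}$ which is minimal among nonempty compact subsets of $\beta\mathbb{T}$ closed under $\hat{}$, then $K$ is not separable.
   Context: For $a,b\subseteq(0,1]$ put $a\,\hat{}\,b=\tfrac12 a\cup\tfrac12(b+1)$; $\mathbb{T}$ is the set generated from $\mathbf{1}=\{1\}$ by $\hat{}$ (the free binary system on one generator). $\beta\mathbb{T}$ is the Čech–Stone compactification of the discrete set $\mathbb{T}$ (the space of ultrafilters on $\mathbb{T}$ with its usual compact topology), and $\hat{}$ is extended to $\beta\mathbb{T}$ by: $W\in\mathcal{U}\,\hat{}\,\mathcal{V}$ iff $\{u\in\mathbb{T}:\{v\in\mathbb{T}:u\,\hat{}\,v\in W\}\in\mathcal{V}\}\in\mathcal{U}$. A subset $K$ is closed under $\hat{}$ if $\xi\,\hat{}\,\eta\in K$ whenever $\xi,\eta\in K$. *)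

From HB Require Import structures.
From mathcomp Require Import all_boot all_order.
From mathcomp Require Import boolp classical_sets cardinality filter topology.
Set Implicit Arguments. Unset Strict Implicit. Unset Printing Implicit Defensive.
Local Open Scope classical_set_scope.

(* The free binary system on one generator 1: formal terms built from [one]
   by the binary operation [hat]. *)
Inductive tree : Type := one : tree | hat : tree -> tree -> tree.

Definition betaT : Type := {F : set_system tree | UltraFilter F}.

HB.instance Definition _ := gen_eqMixin betaT.
HB.instance Definition _ := gen_choiceMixin betaT.

Definition basic_open (A : set tree) : set betaT := [set U | proj1_sig U A].
HB.instance Definition _ := isSubBaseTopological.Build betaT
  (@setT (set tree)) basic_open.

Definition hat_ext (U V : set_system tree) : set_system tree :=
  [set W | U [set u | V [set v | W (hat u v)]]].

Definition hat_closed (K : set betaT) : Prop :=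
  forall x y : betaT, K x -> K y ->
    exists2 z : betaT, K z & proj1_sig z = hat_ext (proj1_sig x) (proj1_sig y).

Definition separable {X : topologicalType} (S : set X) : Prop :=
  exists D : set X, [/\ D `<=` S, countable D & S `<=` closure D].

From Pilot Require Import Defs.
From HB Require Import structures.
From mathcomp Require Import all_boot all_order.
From mathcomp Require Import boolp classical_sets cardinality filter topology.
Set Implicit Arguments. Unset Strict Implicit. Unset Printing Implicit Defensive.
Local Open Scope classical_set_scope.

(* Let [depth t] be the length of the left spine of [t], so that
   [depth (hat u v) = (depth u).+1].  In a minimal K every ultrafilter
   contains [{t | depth t >= n}] for every n, and K meets every residue class
   of [depth] modulo every [2 ^ n].  Given a sequence [f] in K, choose nested
   residues [r n] modulo [2 ^ n] such that [f n] does not contain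
   [{t | depth (rchild t) = r n.+1}], and let [y] in K contain all the classes
   [r n].  For x in K, [x ^ y] contains
   [A = {t | depth (rchild t) = r (depth t).+1}].  An [f n] in K containing
   [A] would contain [{t | depth t >= n} `&` A], which lies inside the class
   avoided by [f n]; so the neighbourhood of [x ^ y] given by [A] misses the
   sequence. *)

#[local] Instance betaT_ultra (x : betaT) : UltraFilter (proj1_sig x) :=
  proj2_sig x.

Lemma ultra_fiber T (F : set_system T) (h : T -> nat) n : UltraFilter F ->
  F [set t | (h t < n)%N] -> exists2 c, (c < n)%N & F [set t | h t = c].
Proof.
move=> UF; elim: n => [|n IH] Fn.
  by have [] := filter_not_empty F; apply: filterS Fn.
have [Fc|FnC] := in_ultra_setVsetC [set t | h t = n] UF; first by exists n.
have [c cn Fc] : exists2 c, (c < n)%N & F [set t | h t = c].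
  apply: IH; apply: filterS (filterI Fn FnC) => t [/= + /eqP].
  by rewrite ltnS leq_eqVlt eq_sym => /orP[->|].
by exists c => //; apply: ltnW.
Qed.

Lemma basic_open_open (A : set tree) : open (basic_open A).
Proof.
exists [set basic_open A]; first by move=> _ ->; apply: finI_from1.
by rewrite bigcup_set1.
Qed.

Lemma basic_open_nbhs (x : betaT) (A : set tree) :
  proj1_sig x A -> nbhs x (basic_open A).
Proof. by move=> xA; apply: open_nbhs_nbhs; split; first exact: basic_open_open. Qed.

Lemma basic_openC (A : set tree) : ~` basic_open A = basic_open (~` A).
Proof.
apply/seteqP; split=> x /=; first by have [|] := in_ultra_setVsetC A (proj2_sig x).
move=> xAC xA; have [] := filter_not_empty (proj1_sig x).
by apply: filterS (filterI xA xAC) => t [].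
Qed.

Lemma basic_open_closed (A : set tree) : closed (basic_open A).
Proof.
by rewrite -[basic_open A]setCK basic_openC; apply/open_closedC/basic_open_open.
Qed.

Lemma compact_basic_open_nested (K : set betaT) (B : nat -> set tree) :
  compact K -> (forall m n, (m <= n)%N -> B n `<=` B m) ->
  (forall n, exists2 x, K x & proj1_sig x (B n)) ->
  exists2 y, K y & forall n, proj1_sig y (B n).
Proof.
move=> cK Bdecr Bmeet; pose C n := K `&` basic_open (B n).
have CF : ProperFilter (filter_from setT C).
  apply: filter_from_proper => [|n _]; last first.
    by have [x Kx xB] := Bmeet n; exists x.
  apply: filter_fromT_filter; first by exists 0%N.
  move=> m n; exists (maxn m n) => x [Kx xB]; split; split=> //.
    by apply: filterS xB; apply/Bdecr/leq_maxl.
  by apply: filterS xB; apply/Bdecr/leq_maxr.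
have [y [Ky]] := cK _ CF (ex_intro2 _ _ 0%N I (@subIsetl _ _ _)).
rewrite clusterE => yC; exists y => // n.
have /(closureS (@subIsetr _ K _)) := yC (C n) (ex_intro2 _ _ n I (fun _ x => x)).
by rewrite -(closure_id _).1 //; apply: basic_open_closed.
Qed.

Lemma hat_ext_left (x y : betaT) (W : set tree) :
  proj1_sig x [set u | forall v, W (hat u v)] ->
  hat_ext (proj1_sig x) (proj1_sig y) W.
Proof. by apply: filterS => u uW; apply: filterS filterT => v _; apply: uW. Qed.

Fixpoint depth (t : tree) : nat := if t is hat u _ then (depth u).+1 else 0.

Definition rchild (t : tree) : tree := if t is hat _ v then v else Defs.one.

Definition depth_mod (N c : nat) : set tree := [set t | depth t = c %[mod N]].

Lemma hat_ext_depth_modS (x y : betaT) N c :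
  proj1_sig x (depth_mod N c) ->
  hat_ext (proj1_sig x) (proj1_sig y) (depth_mod N c.+1).
Proof.
move=> xc; apply: hat_ext_left; apply: filterS xc => u uc v /=.
by rewrite /depth_mod /= -addn1 -modnDml uc modnDml addn1.
Qed.

Section Diagonal.
Variable f : nat -> betaT.

(* [diag_res n.+1] is the lift of [diag_res n] modulo [2 ^ n.+1] whose class,
   read on right subtrees, [f n] does not contain. *)
Fixpoint diag_res (n : nat) : nat :=
  if n is k.+1 then
    if `[< proj1_sig (f k) [set t | depth_mod (2 ^ k.+1) (diag_res k) (rchild t)] >]
    then diag_res k + 2 ^ k else diag_res k
  else 0.

Definition diag_class (n : nat) : set tree := depth_mod (2 ^ n) (diag_res n).

Lemma diag_class_nested m n : (m <= n)%N -> diag_class n `<=` diag_class m.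
Proof.
apply: (homo_leq (r := fun A B : set tree => B `<=` A)).
- exact: subset_refl.
- by move=> B A C AB CB; apply: subset_trans CB AB.
move=> k t; rewrite /diag_class /depth_mod /= => tk.
rewrite -(modn_dvdm _ (dvdn_exp2l 2 (leqnSn k))) tk modn_dvdm ?dvdn_exp2l //.
by case: ifP => _; rewrite ?modnDr.
Qed.

Lemma diag_class_avoid n : ~ proj1_sig (f n) [set t | diag_class n.+1 (rchild t)].
Proof.
rewrite /diag_class /=; case: asboolP => [fn|_ //] fnS.
have [] := filter_not_empty (proj1_sig (f n)).
apply: filterS (filterI fn fnS) => t []; rewrite /depth_mod /= => -> /eqP.
rewrite -{1}[diag_res n]addn0 eqn_modDl eq_sym mod0n.
by rewrite modn_small ?ltn_exp2l // expn_eq0.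
Qed.

End Diagonal.

Section MinimalCompact.
Variable K : set betaT.
Hypothesis K0 : K !=set0.
Hypothesis cK : compact K.
Hypothesis hK : hat_closed K.
Hypothesis mK : forall K' : set betaT, K' !=set0 -> compact K' -> hat_closed K' ->
  K' `<=` K -> K' = K.

Lemma minimal_basic_open (A : set tree) :
  (forall x y, K x -> K y -> hat_ext (proj1_sig x) (proj1_sig y) A) ->
  K `<=` basic_open A.
Proof.
move=> KA; suff <- : K `&` basic_open A = K by move=> x [].
have hat_in x y : K x -> K y -> exists2 z, K z & basic_open A z /\
    proj1_sig z = hat_ext (proj1_sig x) (proj1_sig y).
  move=> Kx Ky; have [z Kz zE] := hK Kx Ky.
  by exists z => //; split=> //; rewrite /basic_open /= zE; apply: KA.
apply: mK; last by move=> ? [].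
- by have [x Kx] := K0; have [z Kz [Az _]] := hat_in _ _ Kx Kx; exists z.
- exact/compact_closedI/basic_open_closed.
- by move=> x y [Kx _] [Ky _]; have [z Kz [Az zE]] := hat_in _ _ Kx Ky; exists z.
Qed.

Lemma depth_ge_mem n x : K x -> proj1_sig x [set t | (n <= depth t)%N].
Proof.
elim: n x => [|n IH] x Kx; first by apply: filterS filterT.
apply: minimal_basic_open Kx => {}x y Kx _; apply: hat_ext_left.
by apply: filterS (IH x Kx) => u nu v /=; rewrite ltnS.
Qed.

Lemma exists_depth_mod N a : (0 < N)%N ->
  exists2 z, K z & proj1_sig z (depth_mod N a).
Proof.
move=> N0; have [x0 Kx0] := K0.
have [c cN x0c] : exists2 c, (c < N)%N & proj1_sig x0 (depth_mod N c).
  have [c cN x0c] := ultra_fiber (h := fun t => depth t %% N) (betaT_ultra x0)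
    (filterS (fun t _ => ltn_pmod (depth t) N0) filterT).
  exists c => //; apply: filterS x0c => t.
  by rewrite /depth_mod /= => ->; rewrite modn_small.
have shift j : exists2 z, K z & proj1_sig z (depth_mod N (c + j)).
  elim: j => [|j [z Kz zc]]; first by exists x0; rewrite ?addn0.
  have [z' Kz' z'E] := hK Kz Kz; exists z' => //.
  by rewrite z'E addnS; apply: hat_ext_depth_modS.
have [z Kz za] := shift (a + N - c); exists z => //.
apply: filterS za => t; rewrite /depth_mod /= => ->.
by rewrite subnKC ?modnDr // (leq_trans (ltnW cN)) ?leq_addl.
Qed.

Lemma exists_nbhs_missing_seq (f : nat -> betaT) : exists z A,
  [/\ K z, proj1_sig z A & forall n, K (f n) -> ~ proj1_sig (f n) A].
Proof.
have [y Ky yf] : exists2 y, K y & forall n, proj1_sig y (diag_class f n).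
  apply: compact_basic_open_nested => // [m n|n]; first exact: diag_class_nested.
  exact/exists_depth_mod/expn_gt0.
have [x Kx] := K0; have [z Kz zE] := hK Kx Ky.
pose A := [set t | diag_class f (depth t).+1 (rchild t)].
exists z, A; split=> // [|n Kfn fnA].
  rewrite zE /hat_ext /=; apply: filterS filterT => u _.
  by apply: filterS (yf (depth u).+2).
apply: (diag_class_avoid (n := n)).
apply: filterS (filterI (depth_ge_mem n Kfn) fnA).
by move=> t [nt]; apply: diag_class_nested.
Qed.

End MinimalCompact.

Theorem proposition6p5 (K : set betaT) :
  K !=set0 -> compact K -> hat_closed K ->
  (forall K' : set betaT, K' !=set0 -> compact K' -> hat_closed K' ->
     K' `<=` K -> K' = K) ->
  ~ separable K.
Proof.
move=> K0 cK hK mK [D [DK cD KD]].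
have [x0 _] := K0; have [g ginj] := countable_injP _ cD.
pose f n := xget x0 [set d | D d /\ g d = n].
have fgK d : D d -> f (g d) = d.
  move=> Dd; have [Dfd gfd] : [set d' | D d' /\ g d' = g d] (f (g d)).
    by apply: xgetPex; exists d.
  by apply: ginj; rewrite ?inE.
have [z [A [Kz zA fA]]] := exists_nbhs_missing_seq K0 cK hK mK f.
have [d [Dd dA]] := KD _ Kz _ (basic_open_nbhs zA).
by apply: (fA (g d)); rewrite fgK //; apply: DK.
Qed.
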